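(* Let $n,d\in\mathbb{N}_0$, let $\mathcal{P}(n,2d)$ be the set of homogeneous polynomials of degree $2d$ in $\mathbb{R}[x_0,\dots,x_n]$ that are non-negative on $\mathbb{R}^{n+1}$, let $t=(t_\alpha)_{\alpha\in\mathbb{N}_0^{n+1},|\alpha|=2d}$ be real numbers, and let $T$ be the linear map on the space of homogeneous polynomials of degree $2d$ in $x_0,\dots,x_n$ with $Tx^\alpha=t_\alpha x^\alpha$ for all $|\alpha|=2d$. Let $L_t$ be the linear functional on that space with $L_t(x^\alpha)=t_\alpha$. Then $T(\mathcal{P}(n,2d))\subseteq\mathcal{P}(n,2d)$ if and only if $L_t(p)\ge0$ for all $p\in\mathcal{P}(n,2d)$. *)

From HB Require Import structures.
From mathcomp Require Import all_boot all_order all_algebra.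
From mathcomp Require Import reals.
From mathcomp Require Import mpoly.
Set Implicit Arguments. Unset Strict Implicit. Unset Printing Implicit Defensive.
Import Order.TTheory GRing.Theory Num.Theory.
Local Open Scope ring_scope.

(* Forms in x_0,...,x_n are elements of {mpoly R[n.+1]}; monomials x^alpha
   are 'X_[alpha] with alpha : 'X_{1..n.+1} and |alpha| = mdeg alpha. *)

Definition Pnd (R : realType) (n d : nat) (p : {mpoly R[n.+1]}) : Prop :=
  p \is (2 * d)%N.-homog /\ forall v : 'I_n.+1 -> R, 0 <= p.@[v].

Definition Tdiag (R : realType) (n : nat) (t : 'X_{1..n.+1} -> R)
    (p : {mpoly R[n.+1]}) : {mpoly R[n.+1]} :=
  \sum_(m <- msupp p) (t m * p@_m) *: 'X_[m].

Definition Lt (R : realType) (n : nat) (t : 'X_{1..n.+1} -> R)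
    (p : {mpoly R[n.+1]}) : R :=
  \sum_(m <- msupp p) t m * p@_m.
Arguments Pnd {R} n d p.
Arguments Tdiag {R n} t p.
Arguments Lt {R n} t p.

(* Both [Tdiag] and the rescaling [p(x) |-> p(v_0 x_0, ..., v_n x_n)] are
   diagonal in the monomial basis, hence commute.  Since [L_t(p)] is the value
   of [T p] at the all-ones vector, the value of [T p] at [v] is [L_t] applied
   to the rescaling of [p] by [v], which is again a nonnegative form.
   Conversely, nonnegativity of [T p] at the all-ones vector is [L_t(p) >= 0]. *)
From HB Require Import structures.
From mathcomp Require Import all_boot all_order all_algebra.
From mathcomp Require Import reals.
From mathcomp Require Import mpoly.
Import Order.TTheory GRing.Theory Num.Theory.
Local Open Scope ring_scope.

Section DiagonalOperator.
Variables (R : realType) (n : nat).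
Implicit Types (p : {mpoly R[n.+1]}) (t c : 'X_{1..n.+1} -> R) (v : 'I_n.+1 -> R).

Lemma mcoeff_Tdiag t p m : (Tdiag t p)@_m = t m * p@_m.
Proof.
rewrite /Tdiag raddf_sum /=.
have [m_supp | m_nsupp] := boolP (m \in msupp p).
  rewrite (bigD1_seq m) //= mcoeffZ mcoeffX eqxx mulr1 big1 ?addr0 //.
  by move=> k /negbTE k_neq_m; rewrite mcoeffZ mcoeffX k_neq_m mulr0.
move: (m_nsupp); rewrite mcoeff_msupp negbK => /eqP ->; rewrite mulr0.
rewrite big_seq big1 // => k k_supp; rewrite mcoeffZ mcoeffX.
have /negbTE -> : k != m by apply: contraNneq m_nsupp => <-.
by rewrite mulr0.
Qed.

Lemma Tdiag_comm t c p : Tdiag t (Tdiag c p) = Tdiag c (Tdiag t p).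
Proof. by apply/mpolyP => m; rewrite !mcoeff_Tdiag mulrCA. Qed.

Lemma meval_Tdiag t p v :
  (Tdiag t p).@[v] = \sum_(m <- msupp p) t m * p@_m * 'X_[m].@[v].
Proof.
rewrite /Tdiag (big_morph (meval v) (mevalD v) (meval0 v)).
by apply: eq_bigr => m _; rewrite mevalZ.
Qed.

Lemma Tdiag_homog t p k : p \is k.-homog -> Tdiag t p \is k.-homog.
Proof.
move=> p_homog; rewrite /Tdiag big_seq.
apply: (big_ind (fun q => q \is k.-homog)) => [||m m_supp].
- exact: dhomog0.
- exact: dhomogD.
by apply: dhomogZ; rewrite dhomogX (dhomog_mf p_homog m_supp).
Qed.

Lemma Lt_meval1 t p : Lt t p = (Tdiag t p).@[fun=> 1].
Proof.
rewrite meval_Tdiag; apply: eq_bigr => m _.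
by rewrite mevalX big1 ?mulr1 // => i _; rewrite expr1n.
Qed.

Lemma meval_Tdiag_monomial v p x :
  (Tdiag (fun m => 'X_[m].@[v]) p).@[x] = p.@[fun i => v i * x i].
Proof.
rewrite meval_Tdiag mevalE; apply: eq_bigr => m _.
rewrite !mevalX mulrAC mulrC -big_split /=.
by congr (_ * _); apply: eq_bigr => i _; rewrite exprMn.
Qed.

Lemma meval_Tdiag_Lt t p v :
  (Tdiag t p).@[v] = Lt t (Tdiag (fun m => 'X_[m].@[v]) p).
Proof.
rewrite Lt_meval1 Tdiag_comm meval_Tdiag_monomial.
by apply: meval_eq => i; rewrite mulr1.
Qed.

End DiagonalOperator.

Lemma Pnd_rescale (R : realType) (n d : nat) (p : {mpoly R[n.+1]})
    (v : 'I_n.+1 -> R) :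
  Pnd n d p -> Pnd n d (Tdiag (fun m => 'X_[m].@[v]) p).
Proof.
move=> [p_homog p_nneg]; split; first exact: Tdiag_homog.
by move=> x; rewrite meval_Tdiag_monomial.
Qed.

Theorem mainTheorem7 (R : realType) (n d : nat) (t : 'X_{1..n.+1} -> R) :
  (forall p : {mpoly R[n.+1]}, Pnd n d p -> Pnd n d (Tdiag t p)) <->
  (forall p : {mpoly R[n.+1]}, Pnd n d p -> 0 <= Lt t p).
Proof.
split=> [T_Pnd p p_Pnd | Lt_nneg p p_Pnd].
  by rewrite Lt_meval1; have [_] := T_Pnd p p_Pnd; apply.
split; first exact/Tdiag_homog/p_Pnd.1.
by move=> v; rewrite meval_Tdiag_Lt; apply/Lt_nneg/Pnd_rescale.
Qed.
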